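(* Let $$y=\frac{s^3(2s^2-4s+3)(s^2-2s+2)}{(2s^2-2s+1)(3s^2-4s+2)},\qquad t=\left(\frac{s^2(2s^2-4s+3)}{3s^2-4s+2}\right)^2.$$ Then $y(t)$ is a solution of $\mathrm{P}_{\mathrm{VI}}$ with parameters $(\theta_1,\theta_2,\theta_3,\theta_4)=(1/3,1/4,1/2,2/3)$.
   Context: $\mathrm{P}_{\mathrm{VI}}$ is the equation $$\frac{d^2y}{dt^2}=\frac12\Big(\frac1y+\frac1{y-1}+\frac1{y-t}\Big)\Big(\frac{dy}{dt}\Big)^2-\Big(\frac1t+\frac1{t-1}+\frac1{y-t}\Big)\frac{dy}{dt}+\frac{y(y-1)(y-t)}{t^2(t-1)^2}\Big(\alpha+\beta\frac{t}{y^2}+\gamma\frac{t-1}{(y-1)^2}+\delta\frac{t(t-1)}{(y-t)^2}\Big),$$ with $\alpha=(\theta_4-1)^2/2$, $\beta=-\theta_1^2/2$, $\gamma=\theta_3^2/2$, $\delta=(1-\theta_2^2)/2$. When $y,t$ are given as rational functions of a parameter on a curve, derivatives with respect to $t$ are computed via the chain rule. *)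

From Stdlib Require Import Reals.
From Coquelicot Require Import Coquelicot.
Open Scope R_scope.

Definition PVI_alpha (th4 : R) : R := (th4 - 1) ^ 2 / 2.
Definition PVI_beta (th1 : R) : R := - (th1 ^ 2) / 2.
Definition PVI_gamma (th3 : R) : R := th3 ^ 2 / 2.
Definition PVI_delta (th2 : R) : R := (1 - th2 ^ 2) / 2.

(* The P_VI equation at a point, given values y, t, y' = dy/dt, y'' = d^2y/dt^2. *)
Definition PVI_eq (th1 th2 th3 th4 : R) (y t y1 y2 : R) : Prop :=
  y2 = / 2 * (/ y + / (y - 1) + / (y - t)) * y1 ^ 2
       - (/ t + / (t - 1) + / (y - t)) * y1
       + y * (y - 1) * (y - t) / (t ^ 2 * (t - 1) ^ 2)
         * (PVI_alpha th4 + PVI_beta th1 * t / y ^ 2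
            + PVI_gamma th3 * (t - 1) / (y - 1) ^ 2
            + PVI_delta th2 * t * (t - 1) / (y - t) ^ 2).

(* A curve s |-> (t(s), y(s)) gives a solution of P_VI when, at every parameter
   value where everything is defined, P_VI holds with t-derivatives computed by
   the chain rule: dy/dt = y'(s)/t'(s), d^2y/dt^2 = (d/ds (dy/dt)) / t'(s). *)
Definition dydt (yf tf : R -> R) (s : R) : R := Derive yf s / Derive tf s.
Definition d2ydt2 (yf tf : R -> R) (s : R) : R :=
  Derive (dydt yf tf) s / Derive tf s.

Definition y_s (s : R) : R :=
  s ^ 3 * (2 * s ^ 2 - 4 * s + 3) * (s ^ 2 - 2 * s + 2)
  / ((2 * s ^ 2 - 2 * s + 1) * (3 * s ^ 2 - 4 * s + 2)).
Definition t_s (s : R) : R :=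
  (s ^ 2 * (2 * s ^ 2 - 4 * s + 3) / (3 * s ^ 2 - 4 * s + 2)) ^ 2.

From Stdlib Require Import Reals Lra Psatz FunctionalExtensionality.
From Coquelicot Require Import Coquelicot.
Open Scope R_scope.

(* y and t are rational in s, so their s-derivatives are explicit rational functions
   (t' = 24 s^3 (2s^2-4s+3) (s-1)^2 (s^2-s+1) / (3s^2-4s+2)^3), and after the chain rule
   P_VI becomes an identity between rational functions of s, checked by [field].
   The differences y - 1, t - 1 and y - t factor into s, s - 1, s + 1, quadratics without
   real roots and the quartic 2s^4-4s^3+3s^2-4s+2, so the singular parameter values are
   s = 0, s = 1, s = -1 and the real roots of that quartic. *)

Lemma quadratic_pos (a b c x : R) :
  0 < a -> b ^ 2 < 4 * a * c -> 0 < a * x ^ 2 + b * x + c.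
Proof.
  intros Ha Hdisc.
  assert (Hsq : 0 <= (2 * a * x + b) ^ 2) by apply pow2_ge_0.
  assert (H4a : 4 * a * (a * x ^ 2 + b * x + c) = (2 * a * x + b) ^ 2 + (4 * a * c - b ^ 2))
    by ring.
  nra.
Qed.

Lemma dydt_eq (yf tf y1 t1 : R -> R) :
  (forall x, is_derive yf x (y1 x)) -> (forall x, is_derive tf x (t1 x)) ->
  dydt yf tf = fun x => y1 x / t1 x.
Proof.
  intros Hy Ht. apply functional_extensionality. intro x.
  unfold dydt. rewrite (is_derive_unique _ _ _ (Hy x)), (is_derive_unique _ _ _ (Ht x)).
  reflexivity.
Qed.

Lemma d2ydt2_eq (yf tf y1 t1 : R -> R) (s : R) :
  (forall x, is_derive yf x (y1 x)) -> (forall x, is_derive tf x (t1 x)) ->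
  d2ydt2 yf tf s = Derive (fun x => y1 x / t1 x) s / t1 s.
Proof.
  intros Hy Ht. unfold d2ydt2. rewrite (dydt_eq _ _ _ _ Hy Ht).
  rewrite (is_derive_unique _ _ _ (Ht s)). reflexivity.
Qed.

Section Positivity.
Variable s : R.
Lemma pos_2s2_2s_1 : 0 < 2 * s ^ 2 - 2 * s + 1.
Proof. pose proof (quadratic_pos 2 (-2) 1 s). lra. Qed.
Lemma pos_3s2_4s_2 : 0 < 3 * s ^ 2 - 4 * s + 2.
Proof. pose proof (quadratic_pos 3 (-4) 2 s). lra. Qed.
Lemma pos_2s2_4s_3 : 0 < 2 * s ^ 2 - 4 * s + 3.
Proof. pose proof (quadratic_pos 2 (-4) 3 s). lra. Qed.
Lemma pos_s2_2s_2 : 0 < s ^ 2 - 2 * s + 2.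
Proof. pose proof (quadratic_pos 1 (-2) 2 s). lra. Qed.
Lemma pos_s2_s_1 : 0 < s ^ 2 - s + 1.
Proof. pose proof (quadratic_pos 1 (-1) 1 s). lra. Qed.
Lemma pos_4s2_7s_4 : 0 < 4 * s ^ 2 - 7 * s + 4.
Proof. pose proof (quadratic_pos 4 (-7) 4 s). lra. Qed.
End Positivity.

Definition y_s' (s : R) : R :=
  s ^ 2 * (36 * s ^ 8 - 208 * s ^ 7 + 576 * s ^ 6 - 996 * s ^ 5 + 1183 * s ^ 4
           - 996 * s ^ 3 + 576 * s ^ 2 - 208 * s + 36)
  / ((2 * s ^ 2 - 2 * s + 1) * (3 * s ^ 2 - 4 * s + 2)) ^ 2.

Definition t_s' (s : R) : R :=
  24 * s ^ 3 * (2 * s ^ 2 - 4 * s + 3) * (s - 1) ^ 2 * (s ^ 2 - s + 1)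
  / (3 * s ^ 2 - 4 * s + 2) ^ 3.

Lemma is_derive_y_s (s : R) : is_derive y_s s (y_s' s).
Proof.
  pose proof (pos_2s2_2s_1 s). pose proof (pos_3s2_4s_2 s).
  unfold y_s, y_s'. auto_derive.
  - repeat split; try apply Rmult_integral_contrapositive; try split; lra.
  - field. split; lra.
Qed.

Lemma is_derive_t_s (s : R) : is_derive t_s s (t_s' s).
Proof.
  pose proof (pos_3s2_4s_2 s).
  unfold t_s, t_s'. auto_derive.
  - repeat split; lra.
  - field. lra.
Qed.

Lemma t_s_sub1 (s : R) :
  t_s s - 1 = 4 * (s - 1) ^ 3 * (s + 1) * (s ^ 2 - s + 1) ^ 2 / (3 * s ^ 2 - 4 * s + 2) ^ 2.
Proof. pose proof (pos_3s2_4s_2 s). unfold t_s. field. lra. Qed.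

Lemma y_s_sub1 (s : R) :
  y_s s - 1 = (s - 1) * (s ^ 2 - s + 1) * (2 * s ^ 4 - 4 * s ^ 3 + 3 * s ^ 2 - 4 * s + 2)
              / ((2 * s ^ 2 - 2 * s + 1) * (3 * s ^ 2 - 4 * s + 2)).
Proof. pose proof (pos_2s2_2s_1 s). pose proof (pos_3s2_4s_2 s). unfold y_s. field. lra. Qed.

Lemma y_s_sub_t_s (s : R) :
  y_s s - t_s s = - s ^ 3 * (2 * s ^ 2 - 4 * s + 3) * (s - 1) * (s ^ 2 - s + 1)
                    * (4 * s ^ 2 - 7 * s + 4)
                  / ((2 * s ^ 2 - 2 * s + 1) * (3 * s ^ 2 - 4 * s + 2) ^ 2).
Proof. pose proof (pos_2s2_2s_1 s). pose proof (pos_3s2_4s_2 s). unfold y_s, t_s. field. lra. Qed.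

Lemma PVI_along_curve (s : R) :
  s <> 0 -> s <> 1 -> s <> -1 -> 2 * s ^ 4 - 4 * s ^ 3 + 3 * s ^ 2 - 4 * s + 2 <> 0 ->
  PVI_eq (1/3) (1/4) (1/2) (2/3) (y_s s) (t_s s)
    (y_s' s / t_s' s) (Derive (fun x => y_s' x / t_s' x) s / t_s' s).
Proof.
  intros Hs0 Hs1 Hsm1 Hq.
  pose proof (pos_2s2_2s_1 s). pose proof (pos_3s2_4s_2 s). pose proof (pos_2s2_4s_3 s).
  pose proof (pos_s2_2s_2 s). pose proof (pos_s2_s_1 s). pose proof (pos_4s2_7s_4 s).
  evar (q2 : R).
  assert (Hq2 : is_derive (fun x => y_s' x / t_s' x) s q2).
  { unfold y_s', t_s', q2. auto_derive; [| reflexivity].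
    repeat split; try exact I;
    repeat first [ apply Rmult_integral_contrapositive_currified
                 | apply Rinv_neq_0_compat ]; lra. }
  rewrite (is_derive_unique (fun x : R => y_s' x / t_s' x) s q2 Hq2). unfold q2.
  unfold PVI_eq, PVI_alpha, PVI_beta, PVI_gamma, PVI_delta.
  (* Substituting the factored differences first makes the side conditions of [field]
     exactly the factors above. *)
  rewrite y_s_sub_t_s, y_s_sub1, t_s_sub1.
  unfold y_s', t_s', y_s, t_s.
  field.
  repeat split; try assumption; lra.
Qed.

Theorem mainTheorem8 :
  forall s : R,
    (2 * s ^ 2 - 2 * s + 1) <> 0 ->
    (3 * s ^ 2 - 4 * s + 2) <> 0 ->
    Derive t_s s <> 0 ->
    t_s s <> 0 -> t_s s - 1 <> 0 ->
    y_s s <> 0 -> y_s s - 1 <> 0 -> y_s s - t_s s <> 0 ->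
    PVI_eq (1/3) (1/4) (1/2) (2/3)
      (y_s s) (t_s s) (dydt y_s t_s s) (d2ydt2 y_s t_s s).
Proof.
  (* t <> 0, t <> 1 and y <> 1 already exclude every singular value of s. *)
  intros s _ _ _ Ht0 Ht1 _ Hy1 _.
  assert (Hs0 : s <> 0) by (intros ->; apply Ht0; unfold t_s, Rdiv; ring).
  rewrite t_s_sub1 in Ht1. rewrite y_s_sub1 in Hy1.
  assert (Hs1 : s <> 1) by (intros ->; apply Ht1; unfold Rdiv; ring).
  assert (Hsm1 : s <> -1) by (intros ->; apply Ht1; unfold Rdiv; ring).
  assert (Hq : 2 * s ^ 4 - 4 * s ^ 3 + 3 * s ^ 2 - 4 * s + 2 <> 0)
    by (intro E; apply Hy1; rewrite E; unfold Rdiv; ring).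
  rewrite (d2ydt2_eq _ _ _ _ _ is_derive_y_s is_derive_t_s),
          (dydt_eq _ _ _ _ is_derive_y_s is_derive_t_s).
  exact (PVI_along_curve s Hs0 Hs1 Hsm1 Hq).
Qed.
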